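(* Let $(E,\tau)$ be a convex space. Then $(E,\tau)$ is uniquely generated if and only if for all $X,Y\subseteq E$, $\tau(X)=\tau(Y)$ implies $\tau(X\cap Y)=\tau(X)=\tau(Y)$.
   Context: $E$ is a finite set and $\tau:2^E\to 2^E$. $(E,\tau)$ is a convex space if (C1) $X\subseteq\tau(X)$ for all $X\subseteq E$, and (convexity) for all $X\subseteq Y\subseteq Z\subseteq E$ with $\tau(X)=\tau(Z)$ we have $\tau(Y)=\tau(X)$. For $X\subseteq E$, a generator of $X$ is any $B\subseteq E$ with $\tau(B)=\tau(X)$; a basis of $X$ is an inclusion-minimal generator of $X$. The space is uniquely generated if every $X\subseteq E$ has exactly one basis. *)

From mathcomp Require Import all_boot.
Set Implicit Arguments. Unset Strict Implicit. Unset Printing Implicit Defensive.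

Definition convex_space (E : finType) (tau : {set E} -> {set E}) : Prop :=
  (forall X : {set E}, X \subset tau X) /\
  (forall X Y Z : {set E}, X \subset Y -> Y \subset Z -> tau X = tau Z ->
     tau Y = tau X).

Definition generator (E : finType) (tau : {set E} -> {set E}) (X B : {set E}) : Prop :=
  tau B = tau X.

Definition basis (E : finType) (tau : {set E} -> {set E}) (X B : {set E}) : Prop :=
  generator tau X B /\ (forall C : {set E}, C \subset B -> generator tau X C -> C = B).

Definition uniquely_generated (E : finType) (tau : {set E} -> {set E}) : Prop :=
  forall X : {set E}, exists! B : {set E}, basis tau X B.

From mathcomp Require Import all_boot.

(* If bases are unique, two generators X and Y of the same closure share the
   basis of X lying inside X with the basis of Y lying inside Y; that basis
   sits in X :&: Y, so by convexity X :&: Y generates too.  Conversely, if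
   generators are closed under intersection, the intersection of two bases
   generates, hence by minimality equals both of them. *)

Section Bases.

Variables (E : finType) (tau : {set E} -> {set E}).

Lemma basis_exists_sub (X : {set E}) : exists2 B, basis tau X B & B \subset X.
Proof.
have [B /minsetP [/eqP gB minB] sBX] :=
  @minset_exists _ (fun A => tau A == tau X) X (eqxx _).
exists B => //; split => // C sCB gC.
by apply: minB => //; apply/eqP.
Qed.

Lemma basis_tau_eq {X Y B : {set E}} :
  tau X = tau Y -> basis tau X B -> basis tau Y B.
Proof.
rewrite /basis /generator => eXY [gB minB].
by split=> [|C sCB gC]; rewrite -?eXY //; apply: minB; rewrite ?eXY.
Qed.

Lemma basis_unique_of_setI (X B C : {set E}) :
  (forall Y Z : {set E}, tau Y = tau Z -> tau (Y :&: Z) = tau Y) ->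
  basis tau X B -> basis tau X C -> B = C.
Proof.
move=> tauI [gB minB] [gC minC].
have gBC : tau (B :&: C) = tau X by rewrite tauI // gB gC.
by rewrite -[LHS](minB _ (subsetIl B C)) // (minC _ (subsetIr B C)).
Qed.

Lemma convex_tau_setI (X Y : {set E}) :
  convex_space tau -> uniquely_generated tau ->
  tau X = tau Y -> tau (X :&: Y) = tau X.
Proof.
move=> [_ conv] ug eXY.
have [B bB sBX] := basis_exists_sub X.
have [C bC sCY] := basis_exists_sub Y.
have [B0 [_ uniqB]] := ug X.
have eBC : B = C.
  by rewrite -(uniqB _ bB) (uniqB _ (basis_tau_eq (esym eXY) bC)).
have sBXY : B \subset X :&: Y by rewrite subsetI sBX eBC sCY.
by case: bB => gB _; rewrite (conv _ _ _ sBXY (subsetIl X Y) gB).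
Qed.

End Bases.

Theorem mainTheorem8 (E : finType) (tau : {set E} -> {set E}) :
  convex_space tau ->
  (uniquely_generated tau <->
   (forall X Y : {set E}, tau X = tau Y ->
      tau (X :&: Y) = tau X /\ tau X = tau Y)).
Proof.
move=> cvx; split=> [ug X Y eXY | tauI X].
  by split=> //; apply: convex_tau_setI.
have [B bB _] := @basis_exists_sub E tau X.
exists B; split=> // C.
by apply: basis_unique_of_setI bB => Y Z /tauI [].
Qed.
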